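(* In the non-binary voting game, let $e(N)$ be any function of $N$. For every $N$ large enough that the number of friendly agents is less than $\mu N$ and the number of unfriendly agents is less than $(1-\mu)N$, and every regular strategy profile $\Sigma^*$ with $N$ agents satisfying $A(\Sigma^* )\ge1-e(N)$, the profile $\Sigma^*$ is an $\varepsilon$-strong Bayes Nash Equilibrium with $\varepsilon=\mathcal{W}B((\mathcal{W}-1)B+1)\,e(N)$.
   Context: Non-binary voting game. $N$ agents each vote for $\mathbf{A}$ or $\mathbf{R}$. World state $W\in\{1,\dots,\mathcal{W}\}$ (unobserved), prior $P_w>0$. Conditional on $W$, each agent independently receives a signal $S_n\in\{1,\dots,M\}$ with $P_{mw}=\Pr[S_n=m\mid W=w]$, satisfying stochastic dominance ($\Pr[S_n\ge m\mid w_1]>\Pr[S_n\ge m\mid w_2]$ for $w_1>w_2$, $m\ge2$). Threshold $\mu\in(0,1)$: $\mathbf{A}$ wins iff at least $\mu N$ agents vote $\mathbf{A}$, else $\mathbf{R}$. Agent $n$ has utility $v_n:\{1,\dots,\mathcal{W}\}\times\{\mathbf{A},\mathbf{R}\}\to\{0,\dots,B\}$ ($B$ a positive integer) with $v_n(w,\mathbf{A})$ strictly increasing, $v_n(w,\mathbf{R})$ strictly decreasing in $w$, and $v_n(w,\mathbf{A})\ne v_n(w,\mathbf{R})$. Constants $\alpha^{\mathbf{A}}_w,\alpha^{\mathbf{R}}_w=1-\alpha^{\mathbf{A}}_w$: exactly $\lfloor\alpha^{\mathbf{R}}_wN\rfloor$ agents prefer $\mathbf{R}$ in state $w$; $\alpha^{\mathbf{A}}_w\ne\mu$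 and rounding does not flip the comparison with $\mu$. Informed majority decision in $w$: $\mathbf{A}$ if $\alpha^{\mathbf{A}}_w>\mu$, else $\mathbf{R}$. $\mathcal{L}=\{w:\alpha^{\mathbf{A}}_w<\mu\}$, $\mathcal{H}=\{w:\alpha^{\mathbf{A}}_w>\mu\}$, both nonempty. For agent $n$, $\mathcal{L}_n=\{w:v_n(w,\mathbf{R})>v_n(w,\mathbf{A})\}$, $\mathcal{H}_n=\{w:v_n(w,\mathbf{A})>v_n(w,\mathbf{R})\}$; friendly if $\mathcal{L}\cap\mathcal{H}_n\ne\emptyset$, unfriendly if $\mathcal{H}\cap\mathcal{L}_n\ne\emptyset$, contingent if $\mathcal{L}_n=\mathcal{L}$. Strategy $\sigma=(\beta_1,\dots,\beta_M)$, $\beta_m$ = probability of voting $\mathbf{A}$ on signal $m$. Regular profile: friendly agents always vote $\mathbf{A}$, unfriendly always vote $\mathbf{R}$. $\lambda^{\mathbf{X}}_w(\Sigma)$: ex-ante probability that $\mathbf{X}$ wins in state $w$. Fidelity $A(\Sigma)=\sum_{w\in\mathcal{L}}P_w\lambda^{\mathbf{R}}_w(\Sigma)+\sum_{w\in\mathcal{H}}P_w\lambda^{\mathbf{A}}_w(\Sigma)$. Expected utility $u_n(\Sigma)=\sum_wP_w(\lambda^{\mathbf{A}}_w(\Sigma)v_n(w,\mathbf{A})+\lambda^{\mathbf{R}}_w(\Sigma)v_n(w,\mathbf{R}))$. $\Sigma$ is an $\varepsilon$-strong Bayes Nash Equilibrium if there is no set $D$ of agents and profile $\Sigma'$ with $\sigma'_n=\sigma_n$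 for $n\notin D$, $u_n(\Sigma')\ge u_n(\Sigma)$ for all $n\in D$ and $u_n(\Sigma')>u_n(\Sigma)+\varepsilon$ for some $n\in D$. *)

From HB Require Import structures.
From mathcomp Require Import all_boot all_order all_algebra.
Set Implicit Arguments. Unset Strict Implicit. Unset Printing Implicit Defensive.
Import Order.TTheory GRing.Theory Num.Theory.
Local Open Scope ring_scope.

(* Conventions: world states are 'I_W (state w+1 of the paper is ordinal w),
   signals are 'I_M (signal m+1 of the paper is ordinal m), agents are 'I_N.
   Outcomes: true = A, false = R.
   A strategy profile is beta : 'I_N -> 'I_M -> R, beta n m = probability that
   agent n votes A upon signal m. *)

Section Game.
Variables (R : archiRealFieldType) (W M N : nat).
Variables (Pw : 'I_W -> R) (P : 'I_M -> 'I_W -> R) (mu : R).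
Variables (v : 'I_N -> 'I_W -> bool -> nat) (alpha : 'I_W -> R).

Definition is_profile (beta : 'I_N -> 'I_M -> R) :=
  forall n m, 0 <= beta n m <= 1.

Definition lam (x : bool) (beta : 'I_N -> 'I_M -> R) (w : 'I_W) : R :=
  \sum_(s : {ffun 'I_N -> 'I_M}) \sum_(a : {ffun 'I_N -> bool})
    (\prod_(n < N) (P (s n) w *
        (if a n then beta n (s n) else 1 - beta n (s n))))
    * (if (mu * N%:R <= #|[set n | a n]|%:R) == x then 1 else 0).

Definition inL (w : 'I_W) := alpha w < mu.
Definition inH (w : 'I_W) := mu < alpha w.

Definition fidelity (beta : 'I_N -> 'I_M -> R) : R :=
  \sum_(w | inL w) Pw w * lam false beta w + \sum_(w | inH w) Pw w * lam true beta w.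

Definition utility (beta : 'I_N -> 'I_M -> R) (n : 'I_N) : R :=
  \sum_w Pw w * (lam true beta w * (v n w true)%:R
                 + lam false beta w * (v n w false)%:R).

Definition friendly (n : 'I_N) : bool :=
  [exists w, inL w && (v n w false < v n w true)%N].
Definition unfriendly (n : 'I_N) : bool :=
  [exists w, inH w && (v n w true < v n w false)%N].

Definition regular (beta : 'I_N -> 'I_M -> R) :=
  (forall n m, friendly n -> beta n m = 1) /\
  (forall n m, unfriendly n -> beta n m = 0).

Definition eps_strong_BNE (eps : R) (beta : 'I_N -> 'I_M -> R) :=
  ~ exists (D : {set 'I_N}) (beta' : 'I_N -> 'I_M -> R),
      [/\ is_profile beta',
          (forall n, n \notin D -> beta' n = beta n),
          (forall n, n \in D -> utility beta n <= utility beta' n) &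
          (exists2 n, n \in D & utility beta n + eps < utility beta' n)].
End Game.

From HB Require Import structures.
From mathcomp Require Import all_boot all_order all_algebra.
From mathcomp Require Import ring lra zify.
Import Order.TTheory GRing.Theory Num.Theory.
Local Open Scope ring_scope.

Set Implicit Arguments.
Unset Strict Implicit.
Unset Printing Implicit Defensive.

(* Suppose a coalition D deviates from the regular profile beta to beta', and let
   shift w be the prior-weighted change of the probability that A wins in state w.
   Agent n gains sum_w shift w * prefA n w, where prefA n w = v_n(w,A) - v_n(w,R)
   increases with w.  Since beta errs with total probability at most e, shift w
   is at least -err w in L-states and at most err w in H-states; so, up to B e,
   every gain is governed by the total rise riseL of A in L-states and the total
   drop dropH in H-states, evaluated at the states ls = max L and hs = min H.
   If every deviator is friendly, they already vote A and can only lower their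
   A-votes; since the voting rule is monotone, riseL = 0.  Symmetrically dropH = 0
   if every deviator is unfriendly.  Otherwise two deviators whose preferences
   point in opposite directions at ls and hs both weakly gain, which forces
   riseL, dropH <= B e.  In all cases the gain is at most B (2B + 1) e. *)

Lemma sum_ffun_prod_eq1 (R : comNzSemiRingType) (I J : finType) (F : I -> J -> R) :
  (forall i, \sum_j F i j = 1) -> \sum_(s : {ffun I -> J}) \prod_i F i (s i) = 1.
Proof. by move=> F1; rewrite -bigA_distr_bigA big1. Qed.

Section ProductBernoulli.
Variables (R : numDomainType) (I : finType).
Implicit Types (p q : I -> R) (f : {ffun I -> bool} -> R).

Definition bern (x : R) (b : bool) : R := if b then x else 1 - x.

Definition expect_bern p f : R :=
  \sum_(a : {ffun I -> bool}) (\prod_i bern (p i) (a i)) * f a.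

Definition toggle (j : I) (a : {ffun I -> bool}) : {ffun I -> bool} :=
  [ffun i => if i == j then ~~ a i else a i].

Lemma toggleK j : involutive (toggle j).
Proof. by move=> a; apply/ffunP => i; rewrite !ffunE; case: eqP; rewrite ?negbK. Qed.

Lemma bern_ge0 x b : 0 <= x <= 1 -> 0 <= bern x b.
Proof. by case/andP=> x0 x1; case: b; rewrite /= ?subr_ge0. Qed.

Lemma eq_expect_bern p q f g :
  p =1 q -> f =1 g -> expect_bern p f = expect_bern q g.
Proof.
move=> pq fg; apply: eq_bigr => a _; rewrite fg; congr (_ * _).
by apply: eq_bigr => i _; rewrite pq.
Qed.

Lemma expect_bernD p f g :
  expect_bern p (fun a => f a + g a) = expect_bern p f + expect_bern p g.
Proof. by rewrite -big_split; apply: eq_bigr => a _; rewrite mulrDr. Qed.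

Lemma expect_bern1 p : expect_bern p (fun=> 1) = 1.
Proof.
rewrite -[RHS](@sum_ffun_prod_eq1 _ _ _ (fun i => bern (p i))).
  by apply: eq_bigr => a _; rewrite mulr1.
by move=> i; rewrite big_bool /= addrC subrK.
Qed.

Lemma expect_bern_ge0 p f :
  (forall i, 0 <= p i <= 1) -> (forall a, 0 <= f a) -> 0 <= expect_bern p f.
Proof.
move=> p01 f0; apply: sumr_ge0 => a _; rewrite mulr_ge0 //.
by apply: prodr_ge0 => i _; apply: bern_ge0.
Qed.

Lemma expect_bern_pivot p f j :
  expect_bern p f = \sum_(a : {ffun I -> bool} | a j) (\prod_(i | i != j) bern (p i) (a i)) *
                      (p j * f a + (1 - p j) * f (toggle j a)).
Proof.
rewrite /expect_bern (bigID (fun a : {ffun I -> bool} => a j)) /=.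
rewrite [X in _ + X](reindex_inj (inv_inj (toggleK j))) /=.
rewrite [X in _ + X](eq_bigl (fun a : {ffun I -> bool} => a j)); last first.
  by move=> a; rewrite ffunE eqxx negbK.
rewrite -big_split /=; apply: eq_bigr => a aj.
rewrite (bigD1 j) // (bigD1 j (P := predT)) //= !ffunE eqxx aj /=.
have -> : \prod_(i | i != j) bern (p i) (toggle j a i) = \prod_(i | i != j) bern (p i) (a i).
  by apply: eq_bigr => i ij; rewrite ffunE (negbTE ij).
ring.
Qed.

Section Monotone.
Variable f : {ffun I -> bool} -> R.
Hypothesis f_mono : forall a a' : {ffun I -> bool}, (forall i, a i -> a' i) -> f a <= f a'.

Lemma le_expect_bern_at p q j :
  (forall i, 0 <= p i <= 1) -> (forall i, i != j -> p i = q i) -> p j <= q j ->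
  expect_bern p f <= expect_bern q f.
Proof.
move=> p01 pq pqj; rewrite (expect_bern_pivot p f j) (expect_bern_pivot q f j).
apply: ler_sum => a aj.
under [X in _ <= X * _]eq_bigr => i ij do rewrite -pq //.
set C := \prod_(i | i != j) _.
have C_ge0 : 0 <= C by apply: prodr_ge0 => i _; apply: bern_ge0.
have f_toggle : f (toggle j a) <= f a.
  by apply: f_mono => i; rewrite ffunE; case: eqP => [->|]; rewrite ?aj.
rewrite -subr_ge0 -mulrBr mulr_ge0 //.
have -> : q j * f a + (1 - q j) * f (toggle j a) - (p j * f a + (1 - p j) * f (toggle j a))
         = (q j - p j) * (f a - f (toggle j a)) by ring.
by rewrite mulr_ge0 // subr_ge0.
Qed.

Lemma le_expect_bern p q :
  (forall i, 0 <= p i <= 1) -> (forall i, 0 <= q i <= 1) -> (forall i, p i <= q i) ->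
  expect_bern p f <= expect_bern q f.
Proof.
move=> p01 q01 pq; pose mid (S : {set I}) i := if i \in S then q i else p i.
have mid01 (S : {set I}) i : 0 <= mid S i <= 1 by rewrite /mid; case: ifP.
suff le_mid k (S : {set I}) : #|S| = k -> expect_bern p f <= expect_bern (mid S) f.
  have -> : expect_bern q f = expect_bern (mid setT) f.
    by apply: eq_expect_bern => // i; rewrite /mid inE.
  exact: le_mid.
elim: k S => [|k IH] S cardS.
  rewrite (cards0_eq cardS) (@eq_expect_bern (mid set0) p f f) // => i.
  by rewrite /mid inE.
have [x Sx] : exists x, x \in S by apply/set0Pn; rewrite -card_gt0 cardS.
apply: le_trans (IH (S :\ x) _) _; first by rewrite (cardsD1 x S) Sx in cardS; case: cardS.
apply: (@le_expect_bern_at _ _ x) => // [i ix|]; rewrite /mid in_setD1.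
  by rewrite ix.
by rewrite eqxx Sx; apply: pq.
Qed.
End Monotone.
End ProductBernoulli.

Section DeviationArithmetic.
Variable R : realDomainType.

Lemma mul_le_max0 (a c b d d0 : R) :
  - c <= a -> - b <= d <= b -> d <= d0 -> 0 <= c ->
  a * d <= Num.max a 0 * d0 + b * c.
Proof.
move=> ca /andP[bd db] dd0 c0; have b0 : 0 <= b by lra.
by rewrite maxEle; case: (leP a 0) => a0; nra.
Qed.

Lemma masses_le_of_two_agents (X Y c p1 q1 p2 q2 : R) :
  0 <= X -> 0 <= Y -> p1 <= -1 -> p1 + 1 <= q1 -> 1 <= q2 -> p2 + 1 <= q2 ->
  0 <= X * p1 - Y * q1 + c -> 0 <= X * p2 - Y * q2 + c -> X <= c /\ Y <= c.
Proof.
move=> X0 Y0 p1m pq1 q2p pq2 gain1 gain2.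
have [XY|YX] := leP X Y.
  suff : X * p2 - Y * q2 <= - Y by split; lra.
  nra.
suff : X * p1 - Y * q1 <= - X by split; lra.
nra.
Qed.

Lemma mass_gap_le (X Y c b p q : R) :
  0 <= X <= c -> 0 <= Y <= c -> - b <= p <= b -> - b <= q <= b ->
  X * p - Y * q <= 2 * b * c.
Proof. move=> /andP[? ?] /andP[? ?] /andP[? ?] /andP[? ?]; nra. Qed.
End DeviationArithmetic.

Section Game.
Variables (R : archiRealFieldType) (W M N B : nat).
Variables (Pw : 'I_W -> R) (P : 'I_M -> 'I_W -> R) (mu : R).
Variables (v : 'I_N -> 'I_W -> bool -> nat) (alpha : 'I_W -> R).
Hypothesis P_ge0 : forall m w, 0 <= P m w.
Hypothesis P_sum1 : forall w, \sum_m P m w = 1.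

Local Notation lam := (@lam R W M N P mu).
Local Notation utility := (@utility R W M N Pw P mu v).
Local Notation inL := (inL mu alpha).
Local Notation inH := (inH mu alpha).

Definition wins (x : bool) (a : {ffun 'I_N -> bool}) : R :=
  if (mu * N%:R <= #|[set n | a n]|%:R) == x then 1 else 0.

Lemma lamE x beta w : lam x beta w =
  \sum_(s : {ffun 'I_N -> 'I_M})
     (\prod_n P (s n) w) * expect_bern (fun n => beta n (s n)) (wins x).
Proof.
apply: eq_bigr => s _; rewrite mulr_sumr; apply: eq_bigr => a _.
by rewrite big_split mulrA.
Qed.

Lemma lam_false beta w : lam false beta w = 1 - lam true beta w.
Proof.
suff <- : lam true beta w + lam false beta w = 1 by rewrite addrAC subrr add0r.
rewrite !lamE -big_split -[RHS](@sum_ffun_prod_eq1 _ _ _ (fun (n : 'I_N) m => P m w)) //=.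
apply: eq_bigr => s _; rewrite -mulrDr -expect_bernD.
rewrite (@eq_expect_bern _ _ _ _ _ (fun=> 1) (frefl _)) ?expect_bern1 ?mulr1 // => a.
by rewrite /wins; case: (_ <= _); rewrite ?addr0 ?add0r.
Qed.

Lemma lam_ge0 x beta w : is_profile beta -> 0 <= lam x beta w.
Proof.
move=> beta01; rewrite lamE; apply: sumr_ge0 => s _; rewrite mulr_ge0 //.
  exact: prodr_ge0.
by apply: expect_bern_ge0 => [n|a]; rewrite /wins //; case: (_ == _).
Qed.

Lemma wins_true_mono (a a' : {ffun 'I_N -> bool}) :
  (forall n, a n -> a' n) -> wins true a <= wins true a'.
Proof.
move=> aa'; rewrite /wins !eqb_id.
have card_le : (#|[set n | a n]| <= #|[set n | a' n]|)%N.
  by apply: subset_leq_card; apply/subsetP => n; rewrite !inE; apply: aa'.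
case: ifP => [mu_le|_]; last by case: ifP.
by rewrite (le_trans mu_le) // ler_nat.
Qed.

Lemma le_lam_true beta beta' w :
  is_profile beta -> is_profile beta' -> (forall n m, beta n m <= beta' n m) ->
  lam true beta w <= lam true beta' w.
Proof.
move=> beta01 beta'01 le_beta; rewrite !lamE; apply: ler_sum => s _.
rewrite ler_wpM2l ?prodr_ge0 //.
apply: le_expect_bern => [|n|n|n]; first exact: wins_true_mono.
- exact: beta01.
- exact: beta'01.
- exact: le_beta.
Qed.

Definition prefA n w : R := (v n w true)%:R - (v n w false)%:R.

Lemma utilityB beta beta' n :
  utility beta' n - utility beta n =
  \sum_w Pw w * (lam true beta' w - lam true beta w) * prefA n w.
Proof.
by rewrite /utility -sumrB; apply: eq_bigr => w _; rewrite !lam_false /prefA; ring.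
Qed.

Definition err beta w : R :=
  Pw w * (if inL w then lam true beta w else lam false beta w).

Hypothesis alpha_neq_mu : forall w, alpha w <> mu.
Hypothesis Pw_sum1 : \sum_w Pw w = 1.

Lemma inHE w : inH w = ~~ inL w.
Proof. by rewrite /inH /inL; have := @alpha_neq_mu w; case: ltgtP => // ->. Qed.

Lemma fidelityE beta : fidelity Pw P mu alpha beta = 1 - \sum_w err beta w.
Proof.
suff <- : fidelity Pw P mu alpha beta + \sum_w err beta w = 1 by rewrite addrK.
rewrite /fidelity (eq_bigl _ _ inHE) [\sum_w err beta w](bigID inL) /=.
rewrite addrACA -!big_split -Pw_sum1 [RHS](bigID inL) /=.
by congr (_ + _); apply: eq_bigr => w Lw; rewrite /err ?Lw ?(negbTE Lw) lam_false; ring.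
Qed.

Hypothesis v_true_incr :
  forall n (w1 w2 : 'I_W), (w1 < w2)%N -> (v n w1 true < v n w2 true)%N.
Hypothesis v_false_decr :
  forall n (w1 w2 : 'I_W), (w1 < w2)%N -> (v n w2 false < v n w1 false)%N.

Lemma prefA_lt n (w1 w2 : 'I_W) : (w1 < w2)%N -> prefA n w1 + 1 <= prefA n w2.
Proof.
move=> lt12; have := v_true_incr n lt12; have := v_false_decr n lt12.
rewrite -!(ler_nat R) -!natr1 /prefA; lra.
Qed.

Lemma prefA_le n (w1 w2 : 'I_W) : (w1 <= w2)%N -> prefA n w1 <= prefA n w2.
Proof.
rewrite leq_eqVlt => /orP[/eqP/val_inj -> // | lt12].
by have := prefA_lt n lt12; lra.
Qed.

Definition prefR w := [set n | (v n w true < v n w false)%N].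

Lemma prefRE n w : (n \in prefR w) = (prefA n w < 0).
Proof. by rewrite inE /prefA subr_lt0 ltr_nat. Qed.

Lemma prefR_sub (w1 w2 : 'I_W) : (w1 <= w2)%N -> prefR w2 \subset prefR w1.
Proof.
move=> le12; apply/subsetP => n; rewrite !prefRE.
exact/le_lt_trans/prefA_le.
Qed.

Hypothesis inLE :
  forall w, (alpha w < mu) = ((N - #|prefR w|)%:R < mu * N%:R).

Lemma inL_lt_inH l h : inL l -> inH h -> (l < h)%N.
Proof.
move=> Ll; rewrite inHE ltnNge; apply: contra => hl.
move: Ll; rewrite /inL !inLE; apply: le_lt_trans.
by rewrite ler_nat leq_sub2l // subset_leq_card // prefR_sub.
Qed.

Hypothesis v_le_B : forall n w x, (v n w x <= B)%N.
Hypothesis v_neq : forall n w, v n w true <> v n w false.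

Lemma prefA_bound n w : - B%:R <= prefA n w <= B%:R.
Proof.
have := v_le_B n w true; have := v_le_B n w false; rewrite -!(ler_nat R) /prefA.
have := ler0n R (v n w true); have := ler0n R (v n w false).
by move=> *; apply/andP; split; lra.
Qed.

Lemma prefA_neq0 n w : prefA n w <= -1 \/ 1 <= prefA n w.
Proof.
rewrite /prefA; have := @v_neq n w.
case: (ltngtP (v n w true) (v n w false)) => // lt_v _; [left|right];
  move: lt_v; rewrite -(ler_nat R) -natr1; lra.
Qed.

Lemma friendly_of_prefA n w : inL w -> 0 < prefA n w -> friendly mu v alpha n.
Proof.
by move=> Lw; rewrite /prefA subr_gt0 ltr_nat => lt_v; apply/existsP; exists w; rewrite Lw.
Qed.

Lemma unfriendly_of_prefA n w : inH w -> prefA n w < 0 -> unfriendly mu v alpha n.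
Proof.
by move=> Hw; rewrite -prefRE inE => lt_v; apply/existsP; exists w; rewrite Hw.
Qed.

Hypothesis Pw_ge0 : forall w, 0 <= Pw w.

Lemma err_ge0 beta w : is_profile beta -> 0 <= err beta w.
Proof. by move=> beta01; rewrite mulr_ge0 //; case: ifP => _; apply: lam_ge0. Qed.

Section Coalition.
Variables (beta beta' : 'I_N -> 'I_M -> R) (D : {set 'I_N}) (ls hs : 'I_W).
Hypotheses (beta01 : is_profile beta) (beta'01 : is_profile beta').
Hypothesis beta_regular : regular mu v alpha beta.
Hypothesis beta'_out : forall n, n \notin D -> beta' n = beta n.
Hypotheses (ls_L : inL ls) (ls_max : forall w, inL w -> (w <= ls)%N).
Hypotheses (hs_H : inH hs) (hs_min : forall w, inH w -> (hs <= w)%N).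

Definition shift w := Pw w * (lam true beta' w - lam true beta w).
Definition riseL := \sum_(w | inL w) Num.max (shift w) 0.
Definition dropH := \sum_(w | inH w) Num.max (- shift w) 0.

Lemma riseL_ge0 : 0 <= riseL.
Proof. by apply: sumr_ge0 => w _; rewrite le_max lexx orbT. Qed.

Lemma dropH_ge0 : 0 <= dropH.
Proof. by apply: sumr_ge0 => w _; rewrite le_max lexx orbT. Qed.

Lemma shift_ge w : inL w -> - err beta w <= shift w.
Proof.
move=> Lw; rewrite /shift /err Lw mulrBr.
have : 0 <= Pw w * lam true beta' w by rewrite mulr_ge0 // lam_ge0.
lra.
Qed.

Lemma shift_le w : inH w -> shift w <= err beta w.
Proof.
rewrite inHE /shift /err => /negbTE ->; rewrite lam_false ler_wpM2l //.
have : 0 <= lam false beta' w by rewrite lam_ge0.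
rewrite lam_false; lra.
Qed.

Lemma gain_le n : utility beta' n - utility beta n <=
  riseL * prefA n ls - dropH * prefA n hs + B%:R * \sum_w err beta w.
Proof.
have -> : utility beta' n - utility beta n = \sum_w shift w * prefA n w.
  exact: utilityB.
have sumL : \sum_(w | inL w) shift w * prefA n w <=
            riseL * prefA n ls + B%:R * \sum_(w | inL w) err beta w.
  rewrite /riseL mulr_suml mulr_sumr -big_split; apply: ler_sum => w Lw.
  apply: mul_le_max0 (shift_ge Lw) (prefA_bound n w) _ (err_ge0 w beta01).
  exact: prefA_le (ls_max Lw).
have sumH : \sum_(w | ~~ inL w) shift w * prefA n w <=
            - (dropH * prefA n hs) + B%:R * \sum_(w | ~~ inL w) err beta w.
  rewrite /dropH (eq_bigl _ _ inHE) mulr_suml -sumrN mulr_sumr -big_split.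
  apply: ler_sum => w; rewrite -inHE => Hw.
  rewrite -[shift w * _]mulrNN -[- (_ * prefA n hs)]mulrN.
  apply: mul_le_max0; first by rewrite lerN2 shift_le.
  - by have /andP[? ?] := prefA_bound n w; apply/andP; split; lra.
  - by rewrite lerN2 prefA_le // hs_min.
  - exact: err_ge0.
rewrite [\sum_w shift w * _](bigID inL) [\sum_w err beta w](bigID inL) /=.
by rewrite [B%:R * _]mulrDr; lra.
Qed.

Lemma riseL_eq0 : (forall n, n \in D -> friendly mu v alpha n) -> riseL = 0.
Proof.
move=> D_friendly; apply: big1 => w _.
have shift_le0 : shift w <= 0.
  rewrite /shift mulr_ge0_le0 // subr_le0 le_lam_true // => n m.
  have [Dn | /beta'_out -> //] := boolP (n \in D).
  by rewrite beta_regular.1 ?D_friendly //; case/andP: (beta'01 n m).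
by rewrite maxEle shift_le0.
Qed.

Lemma dropH_eq0 : (forall n, n \in D -> unfriendly mu v alpha n) -> dropH = 0.
Proof.
move=> D_unfriendly; apply: big1 => w _.
have shift_ge0 : 0 <= shift w.
  rewrite /shift mulr_ge0 // subr_ge0 le_lam_true // => n m.
  have [Dn | /beta'_out -> //] := boolP (n \in D).
  by rewrite beta_regular.2 ?D_unfriendly //; case/andP: (beta'01 n m).
by rewrite maxEle oppr_le0 shift_ge0.
Qed.

Hypothesis gain_ge0 : forall n, n \in D -> utility beta n <= utility beta' n.

Lemma coalition_gain_le n0 : n0 \in D ->
  utility beta' n0 - utility beta n0 <= (B * (2 * B + 1))%:R * \sum_w err beta w.
Proof.
move=> Dn0; set c := B%:R * \sum_w err beta w.
have c_ge0 : 0 <= c by rewrite mulr_ge0 // sumr_ge0 // => w _; apply: err_ge0.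
have B_ge0 : 0 <= B%:R :> R := ler0n R B.
have -> : (B * (2 * B + 1))%:R * \sum_w err beta w = 2 * B%:R * c + c.
  by rewrite /c natrM natrD natrM; ring.
apply: le_trans (gain_le n0) _; rewrite lerD2r.
have weak n : n \in D -> 0 <= riseL * prefA n ls - dropH * prefA n hs + c.
  by move=> Dn; apply: le_trans (gain_le n); rewrite subr_ge0 gain_ge0.
have gap n := prefA_lt n (inL_lt_inH ls_L hs_H).
have [/forall_inP all_friendly | /forall_inPn [n1 Dn1 p1]] :=
  boolP [forall (n | n \in D), 0 < prefA n ls].
  rewrite riseL_eq0 => [|n Dn]; last exact: friendly_of_prefA ls_L (all_friendly n Dn).
  have := all_friendly n0 Dn0; have := gap n0; have := dropH_ge0; nra.
have [/forall_inP all_unfriendly | /forall_inPn [n2 Dn2 q2]] :=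
  boolP [forall (n | n \in D), prefA n hs < 0].
  rewrite dropH_eq0 => [|n Dn]; last exact: unfriendly_of_prefA hs_H (all_unfriendly n Dn).
  have := all_unfriendly n0 Dn0; have := gap n0; have := riseL_ge0; nra.
rewrite !ltNge !negbK in p1 q2.
have {}p1 : prefA n1 ls <= -1 by case: (prefA_neq0 n1 ls) => //; lra.
have {}q2 : 1 <= prefA n2 hs by case: (prefA_neq0 n2 hs) => //; lra.
have [riseL_le dropH_le] := masses_le_of_two_agents riseL_ge0 dropH_ge0
  p1 (gap n1) q2 (gap n2) (weak n1 Dn1) (weak n2 Dn2).
by apply: mass_gap_le; rewrite ?riseL_ge0 ?dropH_ge0 ?prefA_bound.
Qed.

End Coalition.
End Game.

Unset Implicit Arguments.
Set Strict Implicit.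

Theorem lemma2 (R : archiRealFieldType) (W M N B : nat)
    (Pw : 'I_W -> R) (P : 'I_M -> 'I_W -> R) (mu : R)
    (v : 'I_N -> 'I_W -> bool -> nat) (alpha : 'I_W -> R)
    (e : nat -> R) (beta : 'I_N -> 'I_M -> R) :
  (* prior *)
  (forall w, 0 < Pw w) -> \sum_w Pw w = 1 ->
  (* signal distributions *)
  (forall m w, 0 <= P m w) -> (forall w, \sum_m P m w = 1) ->
  (* stochastic dominance: Pr[S >= m | w1] > Pr[S >= m | w2] for w1 > w2, m >= 2 *)
  (forall (w1 w2 : 'I_W), (w2 < w1)%N -> forall m : 'I_M, (1 <= m)%N ->
      \sum_(m' : 'I_M | (m <= m')%N) P m' w2 < \sum_(m' : 'I_M | (m <= m')%N) P m' w1) ->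
  0 < mu < 1 ->
  (0 < B)%N ->
  (* utilities *)
  (forall n w x, (v n w x <= B)%N) ->
  (forall n (w1 w2 : 'I_W), (w1 < w2)%N -> (v n w1 true < v n w2 true)%N) ->
  (forall n (w1 w2 : 'I_W), (w1 < w2)%N -> (v n w2 false < v n w1 false)%N) ->
  (forall n w, v n w true <> v n w false) ->
  (* alpha constants *)
  (forall w, (#|[set n | (v n w true < v n w false)%N]|)%:~R
               = Num.floor ((1 - alpha w) * N%:R) :> int) ->
  (forall w, alpha w <> mu) ->
  (forall w, (alpha w < mu) =
     ((N - #|[set n | (v n w true < v n w false)%N]|)%:R < mu * N%:R)) ->
  (forall w, (mu < alpha w) =
     (mu * N%:R < (N - #|[set n | (v n w true < v n w false)%N]|)%:R)) ->
  (exists w, inL mu alpha w) -> (exists w, inH mu alpha w) ->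
  (* N large enough *)
  #|[set n | friendly mu v alpha n]|%:R < mu * N%:R ->
  #|[set n | unfriendly mu v alpha n]|%:R < (1 - mu) * N%:R ->
  (* regular profile with high fidelity *)
  is_profile beta ->
  regular mu v alpha beta ->
  1 - e N <= fidelity Pw P mu alpha beta ->
  eps_strong_BNE Pw P mu v ((W * B * ((W - 1) * B + 1))%N%:R * e N) beta.
Proof.
(* The bound holds without stochastic dominance, the bounds on mu and B, the
   size conditions on N and the exact counts of R-preferrers. *)
move=> Pw_gt0 Pw_sum1 P_ge0 P_sum1 _ _ _ v_le_B v_true_incr v_false_decr v_neq _
  alpha_neq_mu inLE _ [l0 Ll0] [h0 Hh0] _ _ beta01 beta_regular fidelity_ge.
move=> [D [beta' [beta'01 beta'_out gain_ge0 [n0 Dn0 gain_gt]]]].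
have Pw_ge0 w : 0 <= Pw w := ltW (Pw_gt0 w).
have [ls Lls ls_max] := arg_maxnP val Ll0.
have [hs Hhs hs_min] := arg_minnP val Hh0.
have ls_lt_hs := inL_lt_inH alpha_neq_mu v_true_incr v_false_decr inLE Lls Hhs.
have W_ge2 : (2 <= W)%N by have := ltn_ord hs; lia.
have err_le : \sum_w err Pw P mu alpha beta w <= e N.
  by move: fidelity_ge; rewrite (fidelityE P_sum1 alpha_neq_mu Pw_sum1); lra.
have err_ge0 : 0 <= \sum_w err Pw P mu alpha beta w.
  by apply: sumr_ge0 => w _; apply: err_ge0.
have := coalition_gain_le P_ge0 P_sum1 alpha_neq_mu v_true_incr v_false_decr inLE
  v_le_B v_neq Pw_ge0 beta01 beta'01 beta_regular beta'_out Lls ls_max Hhs hs_min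
  gain_ge0 Dn0.
have eps_ge : (B * (2 * B + 1))%:R * \sum_w err Pw P mu alpha beta w <=
              (W * B * ((W - 1) * B + 1))%N%:R * e N.
  apply: le_trans (ler_wpM2l (ler0n _ _) err_le) (ler_wpM2r (le_trans err_ge0 err_le) _).
  rewrite ler_nat -(subnK W_ge2) addn2 subn1 /=; nia.
lra.
Qed.
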